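(* Let $n\in\mathbb{N}$, let $\omega_1,\dots,\omega_n\in\mathbb{C}$, and let $r_k=|r_k|e^{i\phi_k}\in\mathbb{C}$ ($k\in[n]$) satisfy $\big|\sum_{k\in[n]}\omega_ke^{i\phi_k}\big|=1$. Then: (i) every $\omega_k$ can be written as a finite sum $\omega_k=\sum_{j\in[m_k]}e^{i\theta_{k,j}}$ with $\theta_{k,j}\in\mathbb{R}$; (ii) if for each $k$ there are two such representations $\omega_k=\sum_{j\in[m_k]}e^{i\theta_{k,j}}=\sum_{j\in[m'_k]}e^{i\theta'_{k,j}}$, and $a_{k,j}=r_ke^{i\theta_{k,j}}$, $a'_{k,j}=r_ke^{i\theta'_{k,j}}$, then for every $\alpha\in\mathbb{C}\setminus i\mathbb{R}$ $$\epsilon_\alpha^{-1}\Big(\sum_{(k,j)\in[n]\times[m_k]}\epsilon_\alpha(a_{k,j})\Big)=\epsilon_\alpha^{-1}\Big(\sum_{(k,j)\in[n]\times[m'_k]}\epsilon_\alpha(a'_{k,j})\Big),$$ and consequently the limits of these expressions as $|\alpha|\to0$, as $|\alpha|\to\infty$ with $\mathrm{Re}\,\alpha>0$, or as $|\alpha|\to\infty$ with $\mathrm{Re}\,\alpha<0$, along a fixed argument $\arg\alpha=\Theta$, also coincide. Hence the weighted generalized mean $M_\alpha((r_1,\omega_1),\dots,(r_n,\omega_n)):={}^{\alpha}\!\sum_{(k,j)}a_{k,j}$ (and its limiting versions: weighted geometric mean, maximum and minimum in direction $\Theta$) is independent of the chosen representations of the $\omega_k$.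
   Context: For $\alpha\in\mathbb{C}\setminus i\mathbb{R}$, $\epsilon_\alpha:\mathbb{C}\to\mathbb{C}$ is defined by $\epsilon_\alpha(0)=0$ and $\epsilon_\alpha(rs)=r^\alpha s=e^{\alpha\ln r}s$ for $r>0$, $|s|=1$; it is a bijective multiplicative map. ${}^{\alpha}\!\sum_ta_t:=\epsilon_\alpha^{-1}\big(\sum_t\epsilon_\alpha(a_t)\big)$. *)

From Stdlib Require Import Reals List.
From Coquelicot Require Import Coquelicot.
Import ListNotations.
Open Scope R_scope.

Definition cexpi (t : R) : C := (cos t, sin t).

Definition cexp (w : C) : C := (exp (Re w) * cos (Im w), exp (Re w) * sin (Im w)).

Definition csum (l : list C) : C := fold_right Cplus (RtoC 0) l.

(* epsilon_alpha(0) = 0, epsilon_alpha(r s) = e^{alpha ln r} s  (r > 0, |s| = 1) *)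
Definition eps (alpha z : C) : C :=
  if Req_EM_T (Cmod z) 0 then RtoC 0
  else Cmult (cexp (Cmult alpha (RtoC (ln (Cmod z))))) (Cdiv z (RtoC (Cmod z))).

(* explicit inverse of eps alpha (for Re alpha <> 0):
   w = rho u (rho > 0, |u| = 1) is the image of r s with
   r = rho^(1/Re alpha) and s = u e^{- i Im alpha ln r} *)
Definition eps_inv (alpha w : C) : C :=
  if Req_EM_T (Cmod w) 0 then RtoC 0
  else
    let lnr := ln (Cmod w) / Re alpha in
    Cmult (RtoC (exp lnr))
          (Cmult (Cdiv w (RtoC (Cmod w))) (cexpi (- (Im alpha * lnr)))).

Definition alpha_sum (alpha : C) (l : list C) : C :=
  eps_inv alpha (csum (map (eps alpha) l)).

(* the family a_{k,j} = r_k e^{i theta_{k,j}}, (k,j) in [n] x [m_k],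
   where the representation of omega_k is the list th k of angles *)
Definition afamily (n : nat) (r : nat -> C) (th : nat -> list R) : list C :=
  flat_map (fun k => map (fun t => Cmult (r k) (cexpi t)) (th k)) (seq 0 n).

Definition represents (n : nat) (omega : nat -> C) (th : nat -> list R) : Prop :=
  forall k, (k < n)%nat -> omega k = csum (map cexpi (th k)).

From Stdlib Require Import Reals List Lra Lia.
From Coquelicot Require Import Coquelicot.
Open Scope R_scope.

(* (i): a complex number x + iy with |x|, |y| <= 2 is a sum of four unimodular
   numbers (x/2 + ia) + (x/2 - ia) + (b + iy/2) + (-b + iy/2), and a general one
   is N times such a number.
   (ii): eps_alpha commutes with rotations, eps_alpha (z e^{it}) = eps_alpha z e^{it},
   so the eps_alpha-images of r_k e^{i theta_{k,j}} sum to
   sum_k eps_alpha (r_k) omega_k whatever the representations of the omega_k. *)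

Lemma csum_app (l1 l2 : list C) : csum (l1 ++ l2) = Cplus (csum l1) (csum l2).
Proof.
  induction l1 as [|z l1 IH]; simpl.
  - now rewrite Cplus_0_l.
  - unfold csum in *; simpl. now rewrite IH, Cplus_assoc.
Qed.

Lemma csum_flat_map {A : Type} (f : A -> list C) (l : list A) :
  csum (flat_map f l) = csum (map (fun a => csum (f a)) l).
Proof.
  induction l as [|a l IH]; simpl; [reflexivity|].
  now rewrite csum_app, IH.
Qed.

Lemma csum_map_Cmult {A : Type} (c : C) (f : A -> C) (l : list A) :
  csum (map (fun a => Cmult c (f a)) l) = Cmult c (csum (map f l)).
Proof.
  induction l as [|a l IH]; simpl.
  - now rewrite Cmult_0_r.
  - unfold csum in *; simpl. now rewrite IH, Cmult_plus_distr_l.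
Qed.

Lemma csum_concat_repeat (l : list C) (N : nat) :
  csum (concat (repeat l N)) = Cmult (RtoC (INR N)) (csum l).
Proof.
  induction N as [|N IH]; simpl concat.
  - destruct (csum l) as [u v]. unfold csum, Cmult, RtoC; simpl. f_equal; ring.
  - rewrite csum_app, IH, S_INR.
    destruct (csum l) as [u v]. unfold Cplus, Cmult, RtoC; simpl. f_equal; ring.
Qed.

Lemma Cmod_cexpi (t : R) : Cmod (cexpi t) = 1.
Proof.
  unfold Cmod, cexpi; simpl.
  replace (cos t * (cos t * 1) + sin t * (sin t * 1)) with 1
    by (pose proof (sin2_cos2 t); unfold Rsqr in *; lra).
  apply sqrt_1.
Qed.

Lemma cexpi_unit_circle (c s : R) : c * c + s * s = 1 -> exists t, cexpi t = (c, s).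
Proof.
  intros Hcs.
  assert (Hc : -1 <= c <= 1) by nra.
  assert (Hsin : sqrt (1 - c²) = Rabs s).
  { replace (1 - c²) with (s²) by (unfold Rsqr; lra). apply sqrt_Rsqr_abs. }
  destruct (Rle_lt_dec 0 s) as [Hs | Hs].
  - exists (acos c). unfold cexpi.
    rewrite cos_acos, sin_acos, Hsin, Rabs_right by (auto; lra). reflexivity.
  - exists (- acos c). unfold cexpi.
    rewrite cos_neg, sin_neg, cos_acos, sin_acos, Hsin, Rabs_left by (auto; lra).
    f_equal; ring.
Qed.

Lemma unimodular_sum_small (x y : R) : Rabs x <= 2 -> Rabs y <= 2 ->
  exists l, (x, y) = csum (map cexpi l).
Proof.
  intros Hx Hy.
  apply Rabs_le_between in Hx. apply Rabs_le_between in Hy.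
  set (a := sqrt (1 - (x / 2) * (x / 2))).
  set (b := sqrt (1 - (y / 2) * (y / 2))).
  assert (Ha : a * a = 1 - (x / 2) * (x / 2)) by (apply sqrt_sqrt; nra).
  assert (Hb : b * b = 1 - (y / 2) * (y / 2)) by (apply sqrt_sqrt; nra).
  destruct (cexpi_unit_circle (x / 2) a) as [t1 E1]; [lra|].
  destruct (cexpi_unit_circle (x / 2) (- a)) as [t2 E2]; [lra|].
  destruct (cexpi_unit_circle b (y / 2)) as [t3 E3]; [lra|].
  destruct (cexpi_unit_circle (- b) (y / 2)) as [t4 E4]; [lra|].
  exists (t1 :: t2 :: t3 :: t4 :: nil). unfold csum; simpl.
  rewrite E1, E2, E3, E4. unfold Cplus, RtoC; simpl. f_equal; field.
Qed.

Lemma unimodular_sum (z : C) : exists l, z = csum (map cexpi l).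
Proof.
  destruct z as [x y].
  destruct (INR_unbounded (Rabs x + Rabs y)) as [N HN].
  pose proof (Rabs_pos x). pose proof (Rabs_pos y).
  assert (HN0 : 0 < INR N) by lra.
  assert (Hdiv : forall u, Rabs u <= Rabs x + Rabs y -> Rabs (u / INR N) <= 2).
  { intros u Hu. unfold Rdiv.
    rewrite Rabs_mult, Rabs_inv, (Rabs_right (INR N)) by lra.
    apply Rmult_le_reg_r with (INR N); [lra|]. field_simplify; lra. }
  destruct (unimodular_sum_small (x / INR N) (y / INR N)) as [l El];
    [apply Hdiv; lra .. |].
  exists (concat (repeat l N)).
  rewrite concat_map, map_repeat, csum_concat_repeat, <- El.
  unfold Cmult, RtoC; simpl. f_equal; field; lra.
Qed.

Lemma eps_mult_cexpi (alpha z : C) (t : R) :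
  eps alpha (Cmult z (cexpi t)) = Cmult (eps alpha z) (cexpi t).
Proof.
  unfold eps. rewrite Cmod_mult, Cmod_cexpi, Rmult_1_r.
  destruct (Req_EM_T (Cmod z) 0) as [Hz | Hz].
  - now rewrite Cmult_comm, Cmult_0_r.
  - destruct (cexp (Cmult alpha (RtoC (ln (Cmod z))))) as [p q].
    destruct z as [z1 z2]. unfold cexpi, Cdiv, Cmult, Cinv, RtoC; simpl.
    f_equal; field; intro H0; apply Hz; nra.
Qed.

Lemma csum_eps_afamily (n : nat) (omega r : nat -> C) (th : nat -> list R) (alpha : C) :
  represents n omega th ->
  csum (map (eps alpha) (afamily n r th)) =
  csum (map (fun k => Cmult (eps alpha (r k)) (omega k)) (seq 0 n)).
Proof.
  intros Hth. unfold afamily.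
  rewrite flat_map_concat_map, concat_map, map_map, <- flat_map_concat_map, csum_flat_map.
  f_equal. apply map_ext_in. intros k Hk. apply in_seq in Hk.
  rewrite map_map, (map_ext _ (fun t => Cmult (eps alpha (r k)) (cexpi t)))
    by (intros; apply eps_mult_cexpi).
  rewrite csum_map_Cmult, Hth by lia. reflexivity.
Qed.

Lemma alpha_sum_afamily_indep (n : nat) (omega r : nat -> C) (th th' : nat -> list R) :
  represents n omega th -> represents n omega th' ->
  forall alpha, alpha_sum alpha (afamily n r th) = alpha_sum alpha (afamily n r th').
Proof.
  intros Hth Hth' alpha. unfold alpha_sum.
  now rewrite (csum_eps_afamily n omega r th), (csum_eps_afamily n omega r th').
Qed.

Theorem mainTheorem7 (n : nat) (omega r : nat -> C) (phi : nat -> R)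
  (Hr : forall k, (k < n)%nat -> r k = Cmult (RtoC (Cmod (r k))) (cexpi (phi k)))
  (Hnorm : Cmod (csum (map (fun k => Cmult (omega k) (cexpi (phi k))) (seq 0 n))) = 1) :
  (* (i) each omega_k is a finite sum of unimodular complex numbers *)
  (forall k, (k < n)%nat -> exists l : list R, omega k = csum (map cexpi l)) /\
  (* (ii) independence of the representation *)
  (forall th th' : nat -> list R,
     represents n omega th -> represents n omega th' ->
     (forall alpha : C, Re alpha <> 0 ->
        alpha_sum alpha (afamily n r th) = alpha_sum alpha (afamily n r th')) /\
     (forall (Theta : R) (L : C), cos Theta <> 0 ->
        (* |alpha| -> 0 along arg alpha = Theta *)
        (filterlim (fun t => alpha_sum (Cmult (RtoC t) (cexpi Theta)) (afamily n r th))
                   (at_right 0) (locally L) <->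
         filterlim (fun t => alpha_sum (Cmult (RtoC t) (cexpi Theta)) (afamily n r th'))
                   (at_right 0) (locally L)) /\
        (* |alpha| -> oo along arg alpha = Theta (Re alpha > 0 or < 0 according to cos Theta) *)
        (filterlim (fun t => alpha_sum (Cmult (RtoC t) (cexpi Theta)) (afamily n r th))
                   (Rbar_locally p_infty) (locally L) <->
         filterlim (fun t => alpha_sum (Cmult (RtoC t) (cexpi Theta)) (afamily n r th'))
                   (Rbar_locally p_infty) (locally L)))).
Proof.
  split.
  - intros k _. apply unimodular_sum.
  - intros th th' Hth Hth'.
    pose proof (alpha_sum_afamily_indep n omega r th th' Hth Hth') as Hindep.
    split; [intros alpha _; apply Hindep|].
    intros Theta L _.
    split; split; apply filterlim_ext; intros t; now rewrite Hindep.
Qed.
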